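(* Let $X=\operatorname{diag}(x_1,\dots,x_s)$ and $Y=\operatorname{diag}(y_1,\dots,y_s)$ be real diagonal matrices. The following are equivalent: (i) there exist unitary $U,V\in \mathcal U(s)$ such that $XUY=V$; (ii) there exists a permutation $\sigma$ of $\{1,\dots,s\}$ such that $|x_iy_{\sigma(i)}|=1$ for every $i\in\{1,\dots,s\}$.
   Context: $\mathcal U(s)$ denotes the group of $s\times s$ complex unitary matrices. *)

From mathcomp Require Import all_boot all_order all_algebra perm.
From mathcomp Require Import complex.
From mathcomp Require Import reals.
Set Implicit Arguments. Unset Strict Implicit. Unset Printing Implicit Defensive.
Import Order.TTheory GRing.Theory Num.Theory.
Local Open Scope ring_scope.

Definition adjmx (C : numClosedFieldType) (m n : nat) (A : 'M[C]_(m, n)) : 'M[C]_(n, m) :=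
  (map_mx Num.conj A)^T.

Definition unitary_mx (C : numClosedFieldType) (s : nat) (U : 'M[C]_s) : Prop :=
  U *m adjmx U = 1%:M /\ adjmx U *m U = 1%:M.

Definition rdiag (R : realType) (s : nat) (x : 'I_s -> R) : 'M[R[i]]_s :=
  \matrix_(i, j) ((x i)%:C%C *+ (i == j)).

From mathcomp Require Import all_boot all_order all_algebra perm.
From mathcomp Require Import complex reals.
Set Implicit Arguments.
Unset Strict Implicit.
Unset Printing Implicit Defensive.
Import Order.TTheory GRing.Theory Num.Theory.
Local Open Scope ring_scope.

(* If X U Y = V with U, V unitary, then V V^* = 1 reads X (U Y^2 U^* ) X = 1,
   so X is invertible and Y^2 = U^* X^-2 U: the real diagonal matrices Y^2 and
   X^-2 are similar, hence have the same diagonal up to a permutation sigma,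
   i.e. (x_i y_sigma(i))^2 = 1.  Conversely, if |x_i y_sigma(i)| = 1, then
   X P_sigma Y = diag(x_i y_sigma(i)) P_sigma is a product of unitaries. *)

Lemma char_poly_conj (R : comNzRingType) n (P Q A : 'M[R]_n) :
  P *m Q = 1%:M -> char_poly (P *m A *m Q) = char_poly A.
Proof.
move=> PQ; rewrite /char_poly /char_poly_mx.
have -> : 'X%:M - map_mx polyC (P *m A *m Q) =
    map_mx polyC P *m ('X%:M - map_mx polyC A) *m map_mx polyC Q.
  rewrite mulmxBr mulmxBl !map_mxM; congr (_ - _).
  by rewrite scalar_mxC -mulmxA -map_mxM PQ map_mx1 mulmx1.
by rewrite !det_mulmx mulrAC -det_mulmx -map_mxM PQ map_mx1 det1 mul1r.
Qed.

Lemma prod_XsubC_perm (F : fieldType) n (a b : 'I_n -> F) :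
  \prod_(i < n) ('X - (a i)%:P) = \prod_(i < n) ('X - (b i)%:P) ->
  exists p : 'S_n, forall i, a i = b (p i).
Proof.
move=> eq_prod.
have /tuple_permP[p /val_inj ab] :
    perm_eq [tuple a i | i < n] [tuple b i | i < n].
  by apply: prod_XsubC_eq; rewrite /= !big_map.
by exists p => i; have := congr1 (fun t => tnth t i) ab; rewrite !tnth_mktuple.
Qed.

Section Unitary.
Variable C : numClosedFieldType.

Lemma adjmxM m n p (A : 'M[C]_(m, n)) (B : 'M[C]_(n, p)) :
  adjmx (A *m B) = adjmx B *m adjmx A.
Proof. by rewrite /adjmx map_mxM trmx_mul. Qed.

Lemma unitary_mxM s (U V : 'M[C]_s) :
  unitary_mx U -> unitary_mx V -> unitary_mx (U *m V).
Proof.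
move=> [UU' U'U] [VV' V'V]; rewrite /unitary_mx adjmxM; split.
- by rewrite mulmxA -(mulmxA U) VV' mulmx1 UU'.
- by rewrite mulmxA -(mulmxA _ _ U) U'U mulmx1 V'V.
Qed.

Lemma adjmx_perm_mx s (p : 'S_s) : adjmx (perm_mx p : 'M[C]_s) = perm_mx p^-1.
Proof. by rewrite /adjmx map_perm_mx tr_perm_mx. Qed.

Lemma unitary_perm_mx s (p : 'S_s) : unitary_mx (perm_mx p : 'M[C]_s).
Proof.
by rewrite /unitary_mx adjmx_perm_mx -!perm_mxM mulgV mulVg perm_mx1.
Qed.

End Unitary.

Section RealDiagonal.
Variable R : realType.

Lemma rdiagE s (x : 'I_s -> R) : rdiag x = diag_mx (\row_i (x i)%:C%C).
Proof. by apply/matrixP => i j; rewrite !mxE. Qed.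

Lemma eq_rdiag s (a b : 'I_s -> R) : a =1 b -> rdiag a = rdiag b.
Proof. by move=> ab; apply/matrixP => i j; rewrite !mxE ab. Qed.

Lemma rdiagM s (a b : 'I_s -> R) :
  rdiag a *m rdiag b = rdiag (fun i => a i * b i).
Proof.
rewrite !rdiagE mulmx_diag; congr diag_mx.
by apply/rowP => j; rewrite !mxE rmorphM.
Qed.

Lemma rdiag1 s : rdiag (fun _ : 'I_s => 1 : R) = 1%:M.
Proof. by apply/matrixP => i j; rewrite !mxE. Qed.

Lemma adjmx_rdiag s (x : 'I_s -> R) : adjmx (rdiag x) = rdiag x.
Proof.
rewrite rdiagE; apply/matrixP => i j; rewrite !mxE.
have [->|_] := eqVneq i j; last by rewrite !mulr0n rmorph0.
by rewrite !mulr1n; exact: conjc_real.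
Qed.

Lemma unitary_rdiag s (d : 'I_s -> R) :
  (forall i, `|d i| = 1) -> unitary_mx (rdiag d).
Proof.
move=> d_norm1; have dd1 : rdiag d *m rdiag d = 1%:M.
  rewrite rdiagM -(rdiag1 s); apply: eq_rdiag => i.
  by rewrite -expr2 -real_normK ?num_real // d_norm1 expr1n.
by rewrite /unitary_mx adjmx_rdiag dd1.
Qed.

Lemma rdiag_linv_neq0 s (a : 'I_s -> R) (A : 'M[R[i]]_s) :
  rdiag a *m A = 1%:M -> forall i, a i != 0.
Proof.
move=> aA1 i; apply/eqP => a0; have := congr1 (fun B : 'M_s => B i i) aA1.
rewrite /= rdiagE mul_diag_mx !mxE a0 mul0r eqxx mulr1n => /eqP.
by rewrite eq_sym oner_eq0.
Qed.

Lemma rdiag_linvE s (a : 'I_s -> R) (A : 'M[R[i]]_s) :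
  rdiag a *m A = 1%:M -> A = rdiag (fun i => (a i)^-1).
Proof.
move=> aA1; have a_neq0 := rdiag_linv_neq0 aA1.
have a'a1 : rdiag (fun i => (a i)^-1) *m rdiag a = 1%:M.
  by rewrite rdiagM -(rdiag1 s); apply: eq_rdiag => i; apply: mulVf.
by rewrite -[A]mul1mx -a'a1 -mulmxA aA1 mulmx1.
Qed.

Lemma perm_mxM_rdiag s (p : 'S_s) (y : 'I_s -> R) :
  perm_mx p *m rdiag y = rdiag (fun i => y (p i)) *m perm_mx p.
Proof.
by apply/matrixP => i j; rewrite -row_permE !rdiagE mul_diag_mx !mxE mulr_natr.
Qed.

Lemma char_poly_rdiag s (d : 'I_s -> R) :
  char_poly (rdiag d) = \prod_(i < s) ('X - ((d i)%:C%C)%:P).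
Proof.
rewrite char_poly_trig; last by rewrite rdiagE diag_mx_is_trig.
by apply: eq_bigr => i _; rewrite mxE eqxx mulr1n.
Qed.

Lemma similar_rdiag_perm s (P Q : 'M[R[i]]_s) (a b : 'I_s -> R) :
  P *m Q = 1%:M -> P *m rdiag a *m Q = rdiag b ->
  exists p : 'S_s, forall i, b i = a (p i).
Proof.
move=> PQ /(congr1 char_poly); rewrite char_poly_conj // !char_poly_rdiag.
move=> /esym/prod_XsubC_perm[p ba]; exists p => i.
exact: (congr1 (@complex.Re R) (ba i)).
Qed.

End RealDiagonal.

Theorem lemma3p8 (R : realType) (s : nat) (x y : 'I_s -> R) :
  (exists U V : 'M[R[i]]_s,
      unitary_mx U /\ unitary_mx V /\ rdiag x *m U *m rdiag y = V)
  <-> (exists sigma : 'S_s, forall i : 'I_s, `|x i * y (sigma i)| = 1).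
Proof.
split.
- case=> U [V [[_ U'U] [[VV' _] XUY]]].
  set M := U *m rdiag (fun i => y i * y i) *m adjmx U.
  have X2M : rdiag (fun i => x i * x i) *m M = 1%:M.
    rewrite -rdiagM; apply: mulmx1C; rewrite mulmxA; apply: mulmx1C.
    by rewrite -VV' -XUY !adjmxM !adjmx_rdiag /M -rdiagM !mulmxA.
  have [p y2_x2] :
      exists p : 'S_s, forall i, y i * y i = (x (p i) * x (p i))^-1.
    apply: (similar_rdiag_perm (a := fun i => (x i * x i)^-1)
                               (b := fun i => y i * y i) U'U).
    by rewrite -(rdiag_linvE X2M) /M !mulmxA U'U mul1mx -mulmxA U'U mulmx1.
  exists p^-1%g => i; apply/eqP.
  rewrite -(pexpr_eq1 (n := 2)) // real_normK ?num_real // expr2 mulrACA.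
  by rewrite y2_x2 permKV mulfV ?(rdiag_linv_neq0 X2M).
- case=> sigma xy_norm1.
  exists (perm_mx sigma), (rdiag (fun i => x i * y (sigma i)) *m perm_mx sigma).
  split; first exact: unitary_perm_mx.
  split; last by rewrite -mulmxA perm_mxM_rdiag mulmxA rdiagM.
  exact: (unitary_mxM (unitary_rdiag xy_norm1) (unitary_perm_mx _ sigma)).
Qed.
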